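(* Let $\rho$ be a state of $A$, $\sigma$ a state of $B$, $\eta$ a state of $R$, $d=d_R$, and $\Lambda_p(\eta):=p\eta+(1-p)\mathbb{1}/d$. For every $p\in(0,1]$: $\Delta H_\eta\ge0$ if and only if $\Delta H_{\Lambda_p(\eta)}\ge0$.
   Context: $G$ is a compact group with normalized Haar measure $dg$; finite-dimensional systems $A,B$ carry continuous unitary representations $U_A,U_B$; the reference $R$ has $d_R=d_B$ and carries $U_R(g)=\overline{U_B(g)}$. The $G$-twirl on $RX$ ($X=A,B$) is $\mathcal{G}(M)=\int dg\,(U_R(g)\otimes U_X(g))M(U_R(g)\otimes U_X(g))^\dagger$. $H_{\min}(R|X)_\Omega=-\log_2\inf_{Y\ge0}\{\mathrm{tr}[Y]:\mathbb{1}_R\otimes Y\ge\Omega_{RX}\}$; $H_\eta(\tau):=H_{\min}(R|X)_{\mathcal{G}(\eta\otimes\tau)}$; $\Delta H_\eta:=H_\eta(\sigma)-H_\eta(\rho)$. *)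

From HB Require Import structures.
From mathcomp Require Import all_boot all_order all_algebra.
From mathcomp Require Import all_classical all_reals all_analysis.
From mathcomp Require Import complex mxtens.

Set Implicit Arguments.
Unset Strict Implicit.
Unset Printing Implicit Defensive.

Import Order.TTheory GRing.Theory Num.Theory.
Import numFieldNormedType.Exports.
Local Open Scope classical_set_scope.
Local Open Scope ring_scope.

Section Defs.
Variable R : realType.
Local Notation C := (R[i]).

Definition adj {m n : nat} (M : 'M[C]_(m, n)) : 'M[C]_(n, m) :=
  (map_mx (@conjc R) M)^T.

(* positive semidefinite: <u, M u> >= 0 for every u (in the order of C,
   which forces the value to be real) *)
Definition psd {n : nat} (M : 'M[C]_n) : Prop :=
  forall u : 'cV[C]_n, 0 <= (adj u *m M *m u) 0 0.

Definition loewner_le {n : nat} (A B : 'M[C]_n) : Prop := psd (B - A).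

Definition state {n : nat} (M : 'M[C]_n) : Prop := psd M /\ \tr M = 1.

Definition unitary {n : nat} (U : 'M[C]_n) : Prop := U *m adj U = 1%:M.

End Defs.

Definition compact_group (G : ptopologicalType)
  (mul : G -> G -> G) (inv : G -> G) (e : G) : Prop :=
  [/\ (forall x y z, mul x (mul y z) = mul (mul x y) z),
      (forall x, mul e x = x /\ mul (inv x) x = e),
      (continuous (fun p : G * G => mul p.1 p.2) /\ continuous inv),
      compact [set: G] & hausdorff_space G].

Notation Borel G := (g_sigma_algebraType (@open G)).

(* normalized Haar measure: a Borel probability measure which is left- (and,
   G being compact, also right-) invariant *)
Definition haar (R : realType) (G : ptopologicalType) (mul : G -> G -> G)
  (mu : probability (Borel G) R) : Prop :=
  forall (g : G) (A : set (Borel G)), measurable A ->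
    mu [set mul g x | x in A] = mu A /\ mu [set mul x g | x in A] = mu A.

Definition unitary_rep (R : realType) (G : ptopologicalType)
  (mul : G -> G -> G) (n : nat) (U : G -> 'M[R[i]]_n) : Prop :=
  [/\ (forall g, unitary (U g)),
      (forall g h, U (mul g h) = U g *m U h) &
      (forall i j, continuous (fun g => complex.Re (U g i j)) /\
                   continuous (fun g => complex.Im (U g i j)))].

Section Twirl.
Variables (R : realType) (G : ptopologicalType) (mu : probability (Borel G) R).
Local Notation C := (R[i]).

Definition cint (f : G -> C) : C :=
  Complex (Rintegral mu setT (fun g => complex.Re (f g)))
          (Rintegral mu setT (fun g => complex.Im (f g))).

Definition mxint {m n : nat} (F : G -> 'M[C]_(m, n)) : 'M[C]_(m, n) :=
  \matrix_(i, j) cint (fun g => F g i j).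

Definition twirl {dR dX : nat} (UR : G -> 'M[C]_dR) (UX : G -> 'M[C]_dX)
  (M : 'M[C]_(dR * dX)) : 'M[C]_(dR * dX) :=
  mxint (fun g => (UR g *t UX g) *m M *m adj (UR g *t UX g)).

End Twirl.

Definition Hmin (R : realType) (dR dX : nat) (Om : 'M[R[i]]_(dR * dX)) : R :=
  - (ln (inf [set complex.Re (\tr Y) | Y in
        [set Y : 'M[R[i]]_dX | psd Y /\ loewner_le Om ((1%:M : 'M[R[i]]_dR) *t Y)]])
     / ln 2).

(* H_eta(tau) for tau on X, with U_R = conj U_B *)
Definition Heta (R : realType) (G : ptopologicalType) (mu : probability (Borel G) R)
  (dB dX : nat) (UB : G -> 'M[R[i]]_dB) (UX : G -> 'M[R[i]]_dX)
  (eta : 'M[R[i]]_dB) (tau : 'M[R[i]]_dX) : R :=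
  @Hmin R dB dX (twirl mu (fun g => map_mx (@conjc R) (UB g)) UX (eta *t tau)).

Definition DeltaH (R : realType) (G : ptopologicalType) (mu : probability (Borel G) R)
  (dA dB : nat) (UA : G -> 'M[R[i]]_dA) (UB : G -> 'M[R[i]]_dB)
  (eta : 'M[R[i]]_dB) (rho : 'M[R[i]]_dA) (sigma : 'M[R[i]]_dB) : R :=
  Heta mu UB UB eta sigma - Heta mu UB UA eta rho.

Definition Lambda (R : realType) (d : nat) (p : R) (eta : 'M[R[i]]_d) : 'M[R[i]]_d :=
  (p%:C)%C *: eta + (((1 - p) / d%:R)%:C)%C *: 1%:M.

From HB Require Import structures.
From mathcomp Require Import all_boot all_order all_algebra.
From mathcomp Require Import all_classical all_reals all_analysis.
From mathcomp Require Import complex mxtens.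
From mathcomp Require Import ring lra.

Set Implicit Arguments.
Unset Strict Implicit.
Unset Printing Implicit Defensive.

Import Order.TTheory GRing.Theory Num.Theory.
Import numFieldNormedType.Exports.
Local Open Scope classical_set_scope.
Local Open Scope ring_scope.

(* The twirl is linear and acts on [1 ⊗ τ] through the twirl of the system
   alone, so the twirl of [Λ_p(η) ⊗ τ] is [p Ω + (1-p)/d (1 ⊗ T)], where [Ω] is
   the twirl of [η ⊗ τ] and [T] is again a state.  The map
   [Y ↦ p Y + (1-p)/d T] is a bijection between the feasible sets of the two
   min-entropy programs (positivity of [Y] is recovered from [1 ⊗ Y ≥ Ω ≥ 0])
   and acts on traces as [t ↦ p t + (1-p)/d].  Hence
   [2^(-H_{Λ_p(η)}(τ)) = p 2^(-H_η(τ)) + (1-p)/d] for every state [τ]; this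
   map is increasing and does not depend on [τ], so comparing [τ = σ] with
   [τ = ρ] gives the equivalence. *)

Section ComplexParts.
Variable R : realType.
Implicit Types x y : R[i].

Lemma ReD x y : complex.Re (x + y) = complex.Re x + complex.Re y.
Proof. exact: raddfD. Qed.

Lemma ImD x y : complex.Im (x + y) = complex.Im x + complex.Im y.
Proof. exact: raddfD. Qed.

Lemma ReM x y :
  complex.Re (x * y) = complex.Re x * complex.Re y - complex.Im x * complex.Im y.
Proof. by case: x; case: y. Qed.

Lemma ImM x y :
  complex.Im (x * y) = complex.Re x * complex.Im y + complex.Im x * complex.Re y.
Proof. by case: x => a b; case: y. Qed.

End ComplexParts.

Section Adjoint.
Variable R : realType.
Local Notation C := R[i].

Lemma adjM m n p (A : 'M[C]_(m, n)) (B : 'M[C]_(n, p)) :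
  adj (A *m B) = adj B *m adj A.
Proof. by rewrite /adj map_mxM trmx_mul. Qed.

Lemma adjK m n (A : 'M[C]_(m, n)) : adj (adj A) = A.
Proof. by apply/matrixP => i j; rewrite !mxE conjcK. Qed.

Lemma adjD m n (A B : 'M[C]_(m, n)) : adj (A + B) = adj A + adj B.
Proof. by apply/matrixP => i j; rewrite !mxE rmorphD. Qed.

Lemma adjZ m n (c : C) (A : 'M[C]_(m, n)) : adj (c *: A) = c^*%C *: adj A.
Proof. by apply/matrixP => i j; rewrite !mxE rmorphM. Qed.

Lemma adj_tens m n p q (A : 'M[C]_(m, n)) (B : 'M[C]_(p, q)) :
  adj (A *t B) = adj A *t adj B.
Proof. by rewrite /adj map_mxT trmx_tens. Qed.

Lemma adj_delta n (i : 'I_n) : adj (delta_mx i 0 : 'cV[C]_n) = delta_mx 0 i.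
Proof. by apply/matrixP => a b; rewrite !mxE conjc_nat andbC. Qed.

Lemma delta_mulmx_delta n (A : 'M[C]_n) (i j : 'I_n) :
  delta_mx 0 i *m A *m delta_mx j 0 = (A i j)%:M :> 'M[C]_1.
Proof. by rewrite -rowE -colE [LHS]mx11_scalar !mxE. Qed.

Lemma conjc_unitary n (U : 'M[C]_n) : unitary U -> unitary (map_mx conjc U).
Proof.
rewrite /unitary => UU; have := congr1 (map_mx conjc) UU.
by rewrite map_mxM map_mx1 => <-; congr (_ *m _); apply/matrixP => i j; rewrite !mxE.
Qed.

End Adjoint.

Section PositiveSemidefinite.
Variable R : realType.
Local Notation C := R[i].

Lemma psdD n (A B : 'M[C]_n) : psd A -> psd B -> psd (A + B).
Proof. by move=> hA hB u; rewrite mulmxDr mulmxDl mxE addr_ge0. Qed.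

Lemma psdZ n (c : C) (A : 'M[C]_n) : 0 <= c -> psd A -> psd (c *: A).
Proof. by move=> c0 hA u; rewrite -scalemxAr -scalemxAl mxE mulr_ge0. Qed.

Lemma psd_mulmx_adj n m (W : 'M[C]_(n, m)) (A : 'M[C]_m) :
  psd A -> psd (W *m A *m adj W).
Proof. by move=> hA u; have := hA (adj W *m u); rewrite adjM adjK !mulmxA. Qed.

Lemma psd_diag_ge0 n (A : 'M[C]_n) i : psd A -> 0 <= A i i.
Proof.
by move=> /(_ (delta_mx i 0)); rewrite adj_delta delta_mulmx_delta mxE mulr1n.
Qed.

Lemma psd_trace_ge0 n (A : 'M[C]_n) : psd A -> 0 <= \tr A.
Proof. by move=> hA; apply: sumr_ge0 => i _; apply: psd_diag_ge0. Qed.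

Lemma psd_diag_mx n (d : 'rV[C]_n) : (forall k, 0 <= d 0 k) -> psd (diag_mx d).
Proof.
move=> d0 u; rewrite mul_mx_diag mxE; apply: sumr_ge0 => j _.
by rewrite !mxE mulrAC mulrC mulr_ge0 // mulrC mulcJ_ge0.
Qed.

Lemma psd_scalar_mx n (c : C) : 0 <= c -> psd (c%:M : 'M[C]_n).
Proof. by move=> c0; rewrite -diag_const_mx; apply: psd_diag_mx => k; rewrite mxE. Qed.

Lemma adj_form_delta n (A : 'M[C]_n) (a : C) i j :
  let u : 'cV[C]_n := delta_mx i 0 + a *: delta_mx j 0 in
  (adj u *m A *m u) 0 0
  = A i i + a * A i j + a^*%C * A j i + a^*%C * a * A j j.
Proof.
rewrite /= adjD adjZ !adj_delta !mulmxDl !mulmxDr -!scalemxAr -!scalemxAl.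
by rewrite !delta_mulmx_delta !mxE !mulr1n; ring.
Qed.

Lemma psd_hermitian n (A : 'M[C]_n) i j : psd A -> A j i = (A i j)^*%C.
Proof.
move=> hA.
(* Test the real-valued form on [e_i + e_j] and [e_i + 'i e_j]. *)
have form_real a :
    complex.Im (A i i + a * A i j + a^*%C * A j i + a^*%C * a * A j j) = 0.
  by rewrite -adj_form_delta; apply/ger0_Im/hA.
have := form_real 1; have := form_real 'i%C.
have := ger0_Im (psd_diag_ge0 i hA); have := ger0_Im (psd_diag_ge0 j hA).
case: (A i j) => a b; case: (A j i) => c d; case: (A i i) => ? ?; case: (A j j) => ? ?.
move=> /= *; apply/eqP; rewrite eq_complex /=; apply/andP; split; apply/eqP; lra.
Qed.

Lemma psd_spectral n (A : 'M[C]_n) : psd A ->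
  exists (P : 'M[C]_n) (d : 'rV[C]_n),
    [/\ adj P *m P = 1%:M, A = adj P *m diag_mx d *m P & forall k, 0 <= d 0 k].
Proof.
move=> hA.
have A_herm : A \is hermsymmx.
  rewrite is_hermitianmxE expr0 scale1r; apply/eqP/matrixP => i j.
  by rewrite !mxE (psd_hermitian j i hA).
have /orthomx_spectralP eA := hermitian_normalmx A_herm.
set P := spectralmx A in eA *; set d := spectral_diag A in eA *.
have adjPE : adj P = map_mx Num.conj_op P^T by rewrite /adj map_trmx.
have PadjP : P *m adj P = 1%:M by rewrite adjPE; apply/unitarymxP/spectral_unitarymx.
rewrite invmx_unitary ?spectral_unitarymx // -adjPE in eA.
exists P, d; split => //; first exact: mulmx1C.
have : psd (diag_mx d).
  have := psd_mulmx_adj P hA.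
  by rewrite eA !mulmxA PadjP mul1mx -mulmxA PadjP mulmx1.
by move=> /psd_diag_ge0 d_ge0 k; have := d_ge0 k; rewrite mxE eqxx mulr1n.
Qed.

Lemma psd_le_scalar n (A : 'M[C]_n) : psd A -> exists2 c : C, 0 <= c & psd (c%:M - A).
Proof.
move=> /psd_spectral [P [d [PP -> d0]]].
set c := \sum_k d 0 k; exists c; first exact: sumr_ge0.
have -> : c%:M - adj P *m diag_mx d *m P = adj P *m diag_mx (const_mx c - d) *m P.
  rewrite linearB /= diag_const_mx mulmxBr mulmxBl mul_mx_scalar -scalemxAl PP.
  by rewrite scalemx1.
rewrite -{2}(adjK P); apply: psd_mulmx_adj; apply: psd_diag_mx => k.
by rewrite !mxE subr_ge0 /c (bigD1 k) //= lerDl sumr_ge0.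
Qed.

Lemma state_dim_gt0 n (A : 'M[C]_n) : state A -> (0 < n)%N.
Proof.
case: n A => // A [_]; rewrite /mxtrace big_ord0 => /eqP.
by rewrite eq_sym oner_eq0.
Qed.

End PositiveSemidefinite.

Section Tensor.
Variable R : realType.
Local Notation C := R[i].

Lemma mxtens_index_inj m n : injective (@mxtens_index m n).
Proof. exact: can_inj (@mxtens_indexK m n). Qed.

Lemma tensmx_diag m n (d1 : 'rV[C]_m) (d2 : 'rV[C]_n) :
  diag_mx d1 *t diag_mx d2 =
  diag_mx (\row_k (d1 0 (mxtens_unindex k).1 * d2 0 (mxtens_unindex k).2)).
Proof.
apply/matrixP => a b; case: (mxtens_indexP a) => i k; case: (mxtens_indexP b) => j l.
rewrite tensmxE !mxE mxtens_indexK (inj_eq (@mxtens_index_inj m n)) xpair_eqE /=.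
by case: (i == j); case: (k == l); rewrite ?mulr1n ?mulr0n ?mul0r ?mulr0.
Qed.

Lemma tensmx_scalar m n (a b : C) :
  (a%:M : 'M[C]_m) *t (b%:M : 'M[C]_n) = (a * b)%:M.
Proof.
rewrite -!diag_const_mx tensmx_diag; congr diag_mx.
by apply/rowP => k; rewrite !mxE.
Qed.

Lemma tensmx11 m n : (1%:M : 'M[C]_m) *t (1%:M : 'M[C]_n) = 1%:M.
Proof. by rewrite tensmx_scalar mulr1. Qed.

Lemma tensmxDl m n p q (A B : 'M[C]_(m, n)) (M : 'M[C]_(p, q)) :
  (A + B) *t M = A *t M + B *t M.
Proof. by apply/matrixP => i j; rewrite !mxE mulrDl. Qed.

Lemma tensmxZl m n p q (c : C) (A : 'M[C]_(m, n)) (M : 'M[C]_(p, q)) :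
  (c *: A) *t M = c *: (A *t M).
Proof. by apply/matrixP => i j; rewrite !mxE mulrA. Qed.

Lemma mxtrace_tens m n (A : 'M[C]_m) (B : 'M[C]_n) : \tr (A *t B) = \tr A * \tr B.
Proof. by rewrite /mxtrace mxtens.mulr_sum; apply: eq_bigr => i _; rewrite mxE. Qed.

Lemma psd_tens m n (A : 'M[C]_m) (B : 'M[C]_n) : psd A -> psd B -> psd (A *t B).
Proof.
move=> /psd_spectral [P [d [_ -> d0]]] /psd_spectral [Q [e [_ -> e0]]].
have -> : (adj P *m diag_mx d *m P) *t (adj Q *m diag_mx e *m Q) =
    (adj P *t adj Q) *m (diag_mx d *t diag_mx e) *m adj (adj P *t adj Q).
  by rewrite adj_tens !adjK !tensmx_mul.
apply/psd_mulmx_adj; rewrite tensmx_diag; apply: psd_diag_mx => k.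
by rewrite mxE mulr_ge0.
Qed.

Lemma psd_tens1mx m n (Y : 'M[C]_n) : (0 < m)%N -> psd ((1%:M : 'M[C]_m) *t Y) -> psd Y.
Proof.
move=> m_gt0 hY v; pose e : 'cV[C]_m := delta_mx (Ordinal m_gt0) 0.
(* The [1 * 1] dimensions let [adj_tens] and [tensmx_mul] match. *)
have : 0 <= (adj (e *t v) *m (1%:M *t Y) *m (e *t v) : 'M[C]_(1 * 1, 1 * 1)) 0 0.
  exact: hY.
rewrite adj_tens !tensmx_mul mulmx1 adj_delta mul_delta_mx.
by rewrite [X in X *t _]mx11_scalar [X in _ *t X]mx11_scalar tensmx_scalar !mxE mul1r.
Qed.

End Tensor.

Section ContinuousIntegrals.
Variables (R : realType) (G : ptopologicalType) (mu : probability (Borel G) R).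
Hypothesis G_compact : compact [set: G].
Local Notation C := R[i].

Lemma continuous_borel_measurable (h : G -> R) :
  continuous h -> measurable_fun [set: Borel G] h.
Proof.
move=> h_cont.
apply: (measurability _ (measurable_realfun.RGenOpens.measurableE R)).
move=> _ [_ [a [b ->]] <-]; rewrite setTI; apply: sub_sigma_algebra.
by move/continuousP: h_cont; apply; exact: interval_open.
Qed.

Lemma continuous_integrable (h : G -> R) :
  continuous h -> mu.-integrable [set: Borel G] (EFin \o h).
Proof.
move=> h_cont; apply: measurable_bounded_integrable => //.
- exact: le_lt_trans (probability_le1 mu measurableT) (ltry 1).
- exact: continuous_borel_measurable.
have /compact_bounded : compact (h @` [set: G]).
  exact: continuous_compact (continuous_subspaceT h_cont) G_compact.
by move=> [M [M_real hM]]; exists M; split => // r /hM hr g _; apply: hr; exists g.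
Qed.

Lemma Rintegral_cst_prob (c : R) : Rintegral mu [set: Borel G] (fun=> c) = c.
Proof.
rewrite Rintegral_cst //; set m := (X in fine X).
have -> : m = 1%E by exact: probability_setT.
exact: mulr1.
Qed.

(* [R[i]] carries no topology in the library: continuity of a complex-valued
   function is continuity of its real and imaginary parts. *)
Definition ccontinuous (f : G -> C) :=
  continuous (fun g => complex.Re (f g)) /\ continuous (fun g => complex.Im (f g)).

Lemma ccontinuous_cst (c : C) : ccontinuous (fun=> c).
Proof. by split=> g; apply: cvg_cst. Qed.

Lemma ccontinuousD (f h : G -> C) :
  ccontinuous f -> ccontinuous h -> ccontinuous (fun g => f g + h g).
Proof.
move=> [fRe fIm] [hRe hIm]; split.
  by under eq_fun do rewrite ReD; move=> g; exact: continuousD (fRe g) (hRe g).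
by under eq_fun do rewrite ImD; move=> g; exact: continuousD (fIm g) (hIm g).
Qed.

Lemma ccontinuousM (f h : G -> C) :
  ccontinuous f -> ccontinuous h -> ccontinuous (fun g => f g * h g).
Proof.
move=> [fRe fIm] [hRe hIm]; split.
  under eq_fun do rewrite ReM; move=> g.
  exact: continuousB (continuousM (fRe g) (hRe g)) (continuousM (fIm g) (hIm g)).
under eq_fun do rewrite ImM; move=> g.
exact: continuousD (continuousM (fRe g) (hIm g)) (continuousM (fIm g) (hRe g)).
Qed.

Lemma ccontinuous_conj (f : G -> C) :
  ccontinuous f -> ccontinuous (fun g => (f g)^*%C).
Proof.
move=> [fRe fIm]; split.
  have -> : (fun g => complex.Re (f g)^*%C) = fun g => complex.Re (f g).
    by apply: funext => g; case: (f g).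
  exact: fRe.
have -> : (fun g => complex.Im (f g)^*%C) = fun g => - complex.Im (f g).
  by apply: funext => g; case: (f g).
by move=> g; exact: continuousN (fIm g).
Qed.

Lemma ccontinuous_sum (I : Type) (r : seq I) (P : pred I) (F : I -> G -> C) :
  (forall i, ccontinuous (F i)) ->
  ccontinuous (fun g => \sum_(i <- r | P i) F i g).
Proof.
move=> F_cont; elim: r => [|a r IH].
  by under eq_fun do rewrite big_nil; apply: ccontinuous_cst.
under eq_fun do rewrite big_cons; case: (P a) => //.
exact: ccontinuousD.
Qed.

Lemma eq_cint (f h : G -> C) : f =1 h -> cint mu f = cint mu h.
Proof. by move=> /funext ->. Qed.

Lemma cint_cst (c : C) : cint mu (fun=> c) = c.
Proof. by rewrite /cint !Rintegral_cst_prob; case: c. Qed.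

Lemma cintD (f h : G -> C) : ccontinuous f -> ccontinuous h ->
  cint mu (fun g => f g + h g) = cint mu f + cint mu h.
Proof.
move=> [fRe fIm] [hRe hIm]; rewrite /cint.
under eq_Rintegral do rewrite ReD.
under [X in Complex _ X]eq_Rintegral do rewrite ImD.
by rewrite !RintegralD //; apply: continuous_integrable.
Qed.

Lemma cintZ (c : C) (f : G -> C) : ccontinuous f ->
  cint mu (fun g => c * f g) = c * cint mu f.
Proof.
move=> [fRe fIm]; rewrite /cint.
under eq_Rintegral do rewrite ReM.
under [X in Complex _ X]eq_Rintegral do rewrite ImM.
have cst_mul (a : R) (h : G -> R) : continuous h ->
    mu.-integrable [set: Borel G] (EFin \o (fun g => a * h g)).
  move=> h_cont; apply: continuous_integrable => g.
  exact: continuousM (cvg_cst _) (h_cont g).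
rewrite !RintegralB ?RintegralD ?RintegralZl ?cst_mul //;
  try exact: continuous_integrable.
by case: c.
Qed.

Lemma cint_sum (I : Type) (r : seq I) (P : pred I) (F : I -> G -> C) :
  (forall i, ccontinuous (F i)) ->
  cint mu (fun g => \sum_(i <- r | P i) F i g) = \sum_(i <- r | P i) cint mu (F i).
Proof.
move=> F_cont; elim: r => [|a r IH].
  by rewrite big_nil (eq_cint (fun g => big_nil _ _ _ _)) cint_cst.
rewrite big_cons (eq_cint (fun g => big_cons _ _ _ _ _ _)); case: (P a) => //.
by rewrite cintD ?IH //; apply: ccontinuous_sum.
Qed.

Lemma cint_ge0 (f : G -> C) : (forall g, 0 <= f g) -> 0 <= cint mu f.
Proof.
move=> f_ge0; rewrite /cint.
have -> : Rintegral mu setT (fun g => complex.Im (f g)) = 0.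
  rewrite -[RHS](Rintegral_cst_prob 0); apply: eq_Rintegral => g _.
  exact/ger0_Im/f_ge0.
rewrite lecE /= eqxx /=; apply: Rintegral_ge0 => g _.
by have := f_ge0 g; rewrite lecE => /andP[].
Qed.

Definition mx_ccontinuous m n (F : G -> 'M[C]_(m, n)) :=
  forall i j, ccontinuous (fun g => F g i j).

Lemma mx_ccontinuous_cst m n (M : 'M[C]_(m, n)) : mx_ccontinuous (fun=> M).
Proof. by move=> i j; apply: ccontinuous_cst. Qed.

Lemma mx_ccontinuousZ m n (c : C) (F : G -> 'M[C]_(m, n)) :
  mx_ccontinuous F -> mx_ccontinuous (fun g => c *: F g).
Proof.
move=> F_cont i j; under eq_fun do rewrite mxE.
by apply: ccontinuousM => //; apply: ccontinuous_cst.
Qed.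

Lemma mx_ccontinuousM m n p (F : G -> 'M[C]_(m, n)) (H : G -> 'M[C]_(n, p)) :
  mx_ccontinuous F -> mx_ccontinuous H -> mx_ccontinuous (fun g => F g *m H g).
Proof.
move=> F_cont H_cont i j; under eq_fun do rewrite mxE.
by apply: ccontinuous_sum => k; apply: ccontinuousM.
Qed.

Lemma mx_ccontinuous_conj m n (F : G -> 'M[C]_(m, n)) :
  mx_ccontinuous F -> mx_ccontinuous (fun g => map_mx conjc (F g)).
Proof. by move=> F_cont i j; under eq_fun do rewrite mxE; apply: ccontinuous_conj. Qed.

Lemma mx_ccontinuous_adj m n (F : G -> 'M[C]_(m, n)) :
  mx_ccontinuous F -> mx_ccontinuous (fun g => adj (F g)).
Proof. by move=> F_cont i j; under eq_fun do rewrite !mxE; apply: ccontinuous_conj. Qed.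

Lemma mx_ccontinuous_tens m n p q (F : G -> 'M[C]_(m, n)) (H : G -> 'M[C]_(p, q)) :
  mx_ccontinuous F -> mx_ccontinuous H -> mx_ccontinuous (fun g => F g *t H g).
Proof.
by move=> F_cont H_cont i j; under eq_fun do rewrite mxE; apply: ccontinuousM.
Qed.

Lemma unitary_rep_ccontinuous (mul : G -> G -> G) n (U : G -> 'M[C]_n) :
  unitary_rep mul U -> mx_ccontinuous U.
Proof. by case. Qed.

Lemma eq_mxint m n (F H : G -> 'M[C]_(m, n)) : F =1 H -> mxint mu F = mxint mu H.
Proof. by move=> /funext ->. Qed.

Lemma mxintD m n (F H : G -> 'M[C]_(m, n)) : mx_ccontinuous F -> mx_ccontinuous H ->
  mxint mu (fun g => F g + H g) = mxint mu F + mxint mu H.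
Proof.
move=> F_cont H_cont; apply/matrixP => i j; rewrite !mxE -cintD //.
by apply: eq_cint => g; rewrite mxE.
Qed.

Lemma mxintZ m n (c : C) (F : G -> 'M[C]_(m, n)) : mx_ccontinuous F ->
  mxint mu (fun g => c *: F g) = c *: mxint mu F.
Proof.
move=> F_cont; apply/matrixP => i j; rewrite !mxE -cintZ //.
by apply: eq_cint => g; rewrite mxE.
Qed.

Lemma mxint_tens1mx m n (F : G -> 'M[C]_n) : mx_ccontinuous F ->
  mxint mu (fun g => (1%:M : 'M[C]_m) *t F g) = 1%:M *t mxint mu F.
Proof.
move=> F_cont; apply/matrixP => a b.
case: (mxtens_indexP a) => i k; case: (mxtens_indexP b) => j l.
rewrite tensmxE !mxE -cintZ //.
by apply: eq_cint => g; rewrite tensmxE mxE.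
Qed.

Lemma mxtrace_mxint n (F : G -> 'M[C]_n) : mx_ccontinuous F ->
  \tr (mxint mu F) = cint mu (fun g => \tr (F g)).
Proof.
by move=> F_cont; rewrite /mxtrace cint_sum //; apply: eq_bigr => i _; rewrite mxE.
Qed.

Lemma form_mxint m n (a : 'rV[C]_m) (F : G -> 'M[C]_(m, n)) (b : 'cV[C]_n) :
  mx_ccontinuous F ->
  (a *m mxint mu F *m b) 0 0 = cint mu (fun g => (a *m F g *m b) 0 0).
Proof.
move=> F_cont.
have formE (M : 'M[C]_(m, n)) :
    (a *m M *m b) 0 0 = \sum_j \sum_i a 0 i * b j 0 * M i j.
  rewrite mxE; apply: eq_bigr => j _; rewrite mxE mulr_suml.
  by apply: eq_bigr => i _; rewrite mulrAC.
have entry_cont i j : ccontinuous (fun g => a 0 i * b j 0 * F g i j).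
  by apply: ccontinuousM => //; apply: ccontinuous_cst.
rewrite formE (eq_cint (fun g => formE (F g))) cint_sum; last first.
  by move=> j; apply: ccontinuous_sum.
apply: eq_bigr => j _; rewrite cint_sum //.
by apply: eq_bigr => i _; rewrite cintZ // mxE.
Qed.

Lemma mxint_psd n (F : G -> 'M[C]_n) :
  mx_ccontinuous F -> (forall g, psd (F g)) -> psd (mxint mu F).
Proof.
by move=> F_cont F_psd u; rewrite form_mxint //; apply: cint_ge0 => g; apply: F_psd.
Qed.

Lemma conjugation_ccontinuous n (V : G -> 'M[C]_n) (M : 'M[C]_n) :
  mx_ccontinuous V -> mx_ccontinuous (fun g => V g *m M *m adj (V g)).
Proof.
move=> V_cont; apply: mx_ccontinuousM; last exact: mx_ccontinuous_adj.
by apply: mx_ccontinuousM => //; exact: mx_ccontinuous_cst.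
Qed.

Lemma mxtrace_mxint_conjugation n (V : G -> 'M[C]_n) (M : 'M[C]_n) :
  mx_ccontinuous V -> (forall g, unitary (V g)) ->
  \tr (mxint mu (fun g => V g *m M *m adj (V g))) = \tr M.
Proof.
move=> V_cont V_unitary; rewrite mxtrace_mxint; last exact: conjugation_ccontinuous.
rewrite (eq_cint (fun g => _ : \tr (V g *m M *m adj (V g)) = \tr M)) ?cint_cst //.
by move=> g; rewrite mxtrace_mulC mulmxA (mulmx1C (V_unitary g)) mul1mx.
Qed.

Lemma mxint_conjugation_psd n (V : G -> 'M[C]_n) (M : 'M[C]_n) :
  mx_ccontinuous V -> psd M -> psd (mxint mu (fun g => V g *m M *m adj (V g))).
Proof.
move=> V_cont M_psd; apply: mxint_psd; first exact: conjugation_ccontinuous.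
by move=> g; apply: psd_mulmx_adj.
Qed.

End ContinuousIntegrals.

Section Twirl.
Variables (R : realType) (G : ptopologicalType) (mu : probability (Borel G) R).
Hypothesis G_compact : compact [set: G].
Variables (mul : G -> G -> G) (dB dX : nat).
Variables (UB : G -> 'M[R[i]]_dB) (UX : G -> 'M[R[i]]_dX).
Hypotheses (UB_rep : unitary_rep mul UB) (UX_rep : unitary_rep mul UX).
Local Notation C := R[i].
Local Notation twirlBX := (twirl mu (fun g => map_mx conjc (UB g)) UX).

Let W g := map_mx conjc (UB g) *t UX g.

Lemma W_unitary g : W g *m adj (W g) = 1%:M.
Proof.
have [[UB_unitary _ _] [UX_unitary _ _]] := (UB_rep, UX_rep).
by rewrite /W adj_tens tensmx_mul (conjc_unitary (UB_unitary g)) UX_unitary tensmx11.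
Qed.

Lemma W_ccontinuous : mx_ccontinuous W.
Proof.
apply: mx_ccontinuous_tens; last exact: unitary_rep_ccontinuous UX_rep.
by apply: mx_ccontinuous_conj; exact: unitary_rep_ccontinuous UB_rep.
Qed.

Lemma mxtrace_twirl M : \tr (twirlBX M) = \tr M.
Proof. exact: mxtrace_mxint_conjugation W_ccontinuous W_unitary. Qed.

Lemma twirl_psd M : psd M -> psd (twirlBX M).
Proof. exact: mxint_conjugation_psd W_ccontinuous. Qed.

Definition local_twirl (tau : 'M[C]_dX) :=
  mxint mu (fun g => UX g *m tau *m adj (UX g)).

Lemma mxtrace_local_twirl tau : \tr (local_twirl tau) = \tr tau.
Proof.
have [UX_unitary _ _] := UX_rep.
exact: mxtrace_mxint_conjugation (unitary_rep_ccontinuous UX_rep) UX_unitary.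
Qed.

Lemma local_twirl_psd tau : psd tau -> psd (local_twirl tau).
Proof. exact: mxint_conjugation_psd (unitary_rep_ccontinuous UX_rep). Qed.

Lemma twirl_mix (a b : C) (eta : 'M[C]_dB) (tau : 'M[C]_dX) :
  twirlBX ((a *: eta + b *: 1%:M) *t tau) =
  a *: twirlBX (eta *t tau) + b *: (1%:M *t local_twirl tau).
Proof.
have [UB_unitary _ _] := UB_rep.
have UX_cont := conjugation_ccontinuous tau (unitary_rep_ccontinuous UX_rep).
rewrite /twirl /local_twirl tensmxDl !tensmxZl -(mxint_tens1mx mu G_compact _ UX_cont).
rewrite -!(mxintZ mu G_compact); first last.
- exact: conjugation_ccontinuous W_ccontinuous.
- by apply: mx_ccontinuous_tens => //; exact: mx_ccontinuous_cst.
rewrite -(mxintD mu G_compact); first last.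
- apply/mx_ccontinuousZ/mx_ccontinuous_tens => //; exact: mx_ccontinuous_cst.
- exact/mx_ccontinuousZ/conjugation_ccontinuous/W_ccontinuous.
apply: eq_mxint => g; rewrite mulmxDr mulmxDl -!scalemxAr -!scalemxAl; congr (_ + _).
congr (_ *: _); rewrite adj_tens !tensmx_mul mulmx1.
by rewrite (conjc_unitary (UB_unitary g)).
Qed.

End Twirl.

Section MinEntropy.
Variable R : realType.
Local Notation C := R[i].

Lemma inf_affine (S : set R) (p c : R) : 0 < p -> S !=set0 -> has_lbound S ->
  inf [set p * s + c | s in S] = p * inf S + c.
Proof.
move=> p_gt0 [s0 Ss0] [l l_lb].
have lb' : has_lbound [set p * s + c | s in S].
  by exists (p * l + c) => _ [s Ss <-]; rewrite lerD2r ler_pM2l // l_lb.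
apply/eqP; rewrite eq_le; apply/andP; split.
  rewrite -lerBlDr -ler_pdivrMl //; apply: lb_le_inf; first by exists s0.
  move=> s Ss; rewrite ler_pdivrMl // lerBlDr.
  by apply: (ge_inf lb'); exists s.
apply: lb_le_inf; first by exists (p * s0 + c), s0.
move=> _ [s Ss <-]; rewrite lerD2r ler_pM2l //.
by apply: ge_inf => //; exists l.
Qed.

Lemma le_neglog2 (a b : R) : 0 < a -> 0 < b ->
  (- (ln b / ln 2) <= - (ln a / ln 2)) = (a <= b).
Proof.
move=> a_gt0 b_gt0; have ln2_gt0 : 0 < ln (2 : R) by apply: ln_gt0; rewrite ltr1n.
by rewrite lerN2 ler_pM2r ?invr_gt0 // ler_ln ?posrE.
Qed.

Definition hmin_feasible dR dX (Om : 'M[C]_(dR * dX)) : set R :=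
  [set complex.Re (\tr Y) | Y in
    [set Y : 'M[C]_dX | psd Y /\ loewner_le Om ((1%:M : 'M[C]_dR) *t Y)]].

Lemma HminE dR dX (Om : 'M[C]_(dR * dX)) :
  Hmin Om = - (ln (inf (hmin_feasible Om)) / ln 2).
Proof. by []. Qed.

Lemma hmin_feasible_neq0 dR dX (Om : 'M[C]_(dR * dX)) :
  psd Om -> hmin_feasible Om !=set0.
Proof.
move=> /psd_le_scalar [c c_ge0 Om_le].
exists (complex.Re (\tr (c%:M : 'M[C]_dX))), c%:M => //; split.
  exact: psd_scalar_mx.
by rewrite /loewner_le -[c]mul1r -tensmx_scalar in Om_le.
Qed.

Lemma hmin_feasible_ge dR dX (Om : 'M[C]_(dR * dX)) (s : R) :
  (0 < dR)%N -> \tr Om = 1 -> hmin_feasible Om s -> dR%:R^-1 <= s.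
Proof.
move=> dR_gt0 Om_tr [Y [_ Om_le] <-].
have := psd_trace_ge0 Om_le; rewrite raddfB /= mxtrace_tens mxtrace1 Om_tr.
rewrite subr_ge0 lecE mulrC -(rmorph_nat (real_complex R)) ReM /= mulr0 subr0.
by move=> /andP[_]; rewrite -ler_pdivrMr ?ltr0n // div1r.
Qed.

Lemma hmin_feasible_mix dR dX (Om : 'M[C]_(dR * dX)) (T : 'M[C]_dX) (p c : R) :
  (0 < dR)%N -> 0 < p -> 0 <= c -> psd Om -> psd T -> \tr T = 1 ->
  hmin_feasible ((p%:C)%C *: Om + (c%:C)%C *: (1%:M *t T)) =
  [set p * s + c | s in hmin_feasible Om].
Proof.
move=> dR_gt0 p_gt0 c_ge0 Om_psd T_psd T_tr.
have pC_ge0 : 0 <= (p%:C)%C by rewrite ler0c ltW.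
have cC_ge0 : 0 <= (c%:C)%C by rewrite ler0c.
have pC_neq0 : (p%:C)%C != 0 by rewrite eq_complex /= gt_eqF.
have Re_mix (Y : 'M[C]_dX) :
    complex.Re (\tr ((p%:C)%C *: Y + (c%:C)%C *: T)) = p * complex.Re (\tr Y) + c.
  by rewrite mxtraceD !mxtraceZ T_tr; case: (\tr Y) => a b /=; ring.
apply/seteqP; split => [_ [Y [Y_psd Y_ge] <-] | _ [_ [Y [Y_psd Y_ge] <-] <-]].
- pose Y' := ((p%:C)%C)^-1 *: (Y - (c%:C)%C *: T).
  have -> : Y = (p%:C)%C *: Y' + (c%:C)%C *: T.
    by apply/matrixP => i j; rewrite !mxE; field.
  have Y'_ge : psd (1%:M *t Y' - Om).
    have -> : 1%:M *t Y' - Om = ((p%:C)%C)^-1 *: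
        (1%:M *t Y - ((p%:C)%C *: Om + (c%:C)%C *: (1%:M *t T))).
      by apply/matrixP => i j; rewrite !mxE; field.
    by apply: psdZ => //; rewrite invr_ge0.
  exists (complex.Re (\tr Y')); last by rewrite Re_mix.
  exists Y' => //; split => //; apply: (psd_tens1mx dR_gt0).
  by rewrite -[_ *t Y'](subrK Om); apply: psdD.
- exists ((p%:C)%C *: Y + (c%:C)%C *: T); last exact: Re_mix.
  split; first by apply: psdD; apply: psdZ.
  rewrite /loewner_le; have -> : 1%:M *t ((p%:C)%C *: Y + (c%:C)%C *: T) -
      ((p%:C)%C *: Om + (c%:C)%C *: (1%:M *t T)) = (p%:C)%C *: (1%:M *t Y - Om).
    by apply/matrixP => i j; rewrite !mxE; ring.
  exact: psdZ.
Qed.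

End MinEntropy.

Lemma Heta_Lambda (R : realType) (G : ptopologicalType) (mu : probability (Borel G) R)
    (mul : G -> G -> G) (dB dX : nat) (UB : G -> 'M[R[i]]_dB) (UX : G -> 'M[R[i]]_dX)
    (eta : 'M[R[i]]_dB) (tau : 'M[R[i]]_dX) (p : R) :
  compact [set: G] -> unitary_rep mul UB -> unitary_rep mul UX ->
  state eta -> state tau -> 0 < p <= 1 ->
  exists2 q, 0 < q &
    Heta mu UB UX eta tau = - (ln q / ln 2) /\
    Heta mu UB UX (Lambda p eta) tau = - (ln (p * q + (1 - p) / dB%:R) / ln 2).
Proof.
move=> G_compact UB_rep UX_rep eta_state [tau_psd tau_tr] /andP[p_gt0 p_le1].
have dB_gt0 := state_dim_gt0 eta_state; have [eta_psd eta_tr] := eta_state.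
set Om := twirl mu (fun g => map_mx conjc (UB g)) UX (eta *t tau).
have Om_psd : psd Om := twirl_psd mu G_compact UB_rep UX_rep (psd_tens eta_psd tau_psd).
have Om_tr : \tr Om = 1.
  rewrite (mxtrace_twirl mu G_compact UB_rep UX_rep) mxtrace_tens.
  by rewrite eta_tr tau_tr mulr1.
have Om_ge s : hmin_feasible Om s -> dB%:R^-1 <= s by exact: hmin_feasible_ge.
exists (inf (hmin_feasible Om)); last split => //.
  apply: lt_le_trans (lb_le_inf (hmin_feasible_neq0 Om_psd) Om_ge).
  by rewrite invr_gt0 ltr0n.
rewrite /Heta HminE /Lambda (twirl_mix mu G_compact UB_rep UX_rep) -/Om.
rewrite hmin_feasible_mix //.
- by rewrite inf_affine //; [exact: hmin_feasible_neq0 | exists dB%:R^-1].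
- by rewrite divr_ge0 ?subr_ge0.
- exact: (local_twirl_psd mu G_compact UX_rep).
- by rewrite (mxtrace_local_twirl mu G_compact UX_rep).
Qed.

Theorem lemma11 (R : realType) (G : ptopologicalType)
  (mul : G -> G -> G) (inv : G -> G) (e : G)
  (mu : probability (g_sigma_algebraType (@open G)) R)
  (dA dB : nat) (UA : G -> 'M[R[i]]_dA) (UB : G -> 'M[R[i]]_dB)
  (rho : 'M[R[i]]_dA) (sigma eta : 'M[R[i]]_dB) (p : R) :
  compact_group mul inv e -> haar mul mu ->
  unitary_rep mul UA -> unitary_rep mul UB ->
  state rho -> state sigma -> state eta ->
  0 < p <= 1 ->
  (0 <= DeltaH mu UA UB eta rho sigma <->
   0 <= DeltaH mu UA UB (Lambda p eta) rho sigma).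
Proof.
move=> [_ _ _ G_compact _] _ UA_rep UB_rep rho_state sigma_state eta_state p_range.
have [qs qs_gt0 [Hs HsL]] :=
  Heta_Lambda mu G_compact UB_rep UB_rep eta_state sigma_state p_range.
have [qr qr_gt0 [Hr HrL]] :=
  Heta_Lambda mu G_compact UB_rep UA_rep eta_state rho_state p_range.
have /andP[p_gt0 p_le1] := p_range.
have c_ge0 : 0 <= (1 - p) / dB%:R by rewrite divr_ge0 ?subr_ge0.
have mix_gt0 q : 0 < q -> 0 < p * q + (1 - p) / dB%:R.
  by move=> q_gt0; rewrite ltr_wpDr // mulr_gt0.
rewrite /DeltaH Hs Hr HsL HrL !subr_ge0 !le_neglog2 ?mix_gt0 //.
by rewrite lerD2r ler_pM2l.
Qed.
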